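(* Let $\mathbb{K}\in\{\mathbb{R},\mathbb{C}\}$, $\mathbf{R}_U\in\mathbb{K}^{n\times n}$ self-adjoint positive definite, $U:=\mathbb{K}^n$ with $\langle\mathbf{x},\mathbf{y}\rangle_U:=\langle\mathbf{R}_U\mathbf{x},\mathbf{y}\rangle$ and norm $\|\cdot\|_U$. Let $\mathbf{u}^1,\dots,\mathbf{u}^m\in U$, $\mathbf{U}_m:=[\mathbf{u}^1,\dots,\mathbf{u}^m]$, $U_m:=\mathrm{range}(\mathbf{U}_m)$, let $\mathbf{\Theta}\in\mathbb{K}^{k\times n}$ and $\varepsilon\in[0,1)$. Say $\mathbf{\Theta}$ is an $\varepsilon$-embedding for a subspace $V$ if $|\langle\mathbf{x},\mathbf{y}\rangle_U-\langle\mathbf{\Theta}\mathbf{x},\mathbf{\Theta}\mathbf{y}\rangle|\le\varepsilon\|\mathbf{x}\|_U\|\mathbf{y}\|_U$ for all $\mathbf{x},\mathbf{y}\in V$. Let $r$ be a positive integer, let $U_r^*$ be a minimizer of $\sum_{i=1}^m\|\mathbf{u}^i-\mathbf{P}_{W}\mathbf{u}^i\|_U^2$ over subspaces $W\subseteq U_m$ with $\dim(W)=r$, and let $U_r$ be the subspace produced by the sketched method of snapshots with parameter $r$ (defined below). Let $\Delta^{\mathrm{POD}}$ be as defined below. (i) Let $Y\subseteq U_m$ be a subspace with $\dim(Y)\ge r$ and $\Delta_Y:=\frac1m\sum_{i=1}^m\|\mathbf{u}^i-\mathbf{P}_Y\mathbf{u}^i\|_U^2$. If $\mathbf{\Theta}$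 is an $\varepsilon$-embedding for $Y$, for each of the subspaces $\mathrm{span}(\mathbf{u}^i-\mathbf{P}_Y\mathbf{u}^i)$, $i=1,\dots,m$, and for each of the subspaces $\mathrm{span}(\mathbf{u}^i-\mathbf{P}_{U_r^*}\mathbf{u}^i)$, $i=1,\dots,m$, then $$\frac1m\sum_{i=1}^m\|\mathbf{u}^i-\mathbf{P}_{U_r}\mathbf{u}^i\|_U^2\le\frac{2}{1-\varepsilon}\Delta^{\mathrm{POD}}(U_r)+\Big(\frac{2(1+\varepsilon)}{1-\varepsilon}+1\Big)\Delta_Y\le\frac{2(1+\varepsilon)}{1-\varepsilon}\,\frac1m\sum_{i=1}^m\|\mathbf{u}^i-\mathbf{P}_{U_r^*}\mathbf{u}^i\|_U^2+\Big(\frac{2(1+\varepsilon)}{1-\varepsilon}+1\Big)\Delta_Y.$$ (ii) If $\mathbf{\Theta}$ is an $\varepsilon$-embedding for $U_m$ (and $r\le\dim U_m$), then $$\frac1m\sum_{i=1}^m\|\mathbf{u}^i-\mathbf{P}_{U_r}\mathbf{u}^i\|_U^2\le\frac{1}{1-\varepsilon}\Delta^{\mathrm{POD}}(U_r)\le\frac{1+\varepsilon}{1-\varepsilon}\,\frac1m\sum_{i=1}^m\|\mathbf{u}^i-\mathbf{P}_{U_r^*}\mathbf{u}^i\|_U^2.$$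
   Context: $\langle\mathbf{x},\mathbf{y}\rangle=\mathbf{x}^{\mathrm{H}}\mathbf{y}$, $\|\cdot\|$ Euclidean norm; $\mathbf{P}_V$ is the $\langle\cdot,\cdot\rangle_U$-orthogonal projection onto a subspace $V$. Sketched method of snapshots: let $\mathbf{G}:=(\mathbf{\Theta}\mathbf{U}_m)^{\mathrm{H}}\mathbf{\Theta}\mathbf{U}_m$, $l:=\mathrm{rank}(\mathbf{\Theta}\mathbf{U}_m)$ (with $r\le l$, so that $U_r$ is defined), and let $(\lambda_i,\mathbf{t}_i)_{i=1}^l$ be eigenpairs of $\mathbf{G}$ for its nonzero eigenvalues, with orthonormal eigenvectors and $\lambda_1\ge\dots\ge\lambda_l$; then $U_r:=\mathrm{range}(\mathbf{U}_m[\mathbf{t}_1,\dots,\mathbf{t}_r])$. For $V\subseteq U_m$ and $\mathbf{x}\in U_m$ let $\mathbf{P}_V^{\mathbf{\Theta}}\mathbf{x}\in\arg\min_{\mathbf{w}\in V}\|\mathbf{\Theta}(\mathbf{x}-\mathbf{w})\|$, and $\Delta^{\mathrm{POD}}(V):=\frac1m\sum_{i=1}^m\|\mathbf{\Theta}(\mathbf{u}^i-\mathbf{P}_V^{\mathbf{\Theta}}\mathbf{u}^i)\|^2$. *)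

From HB Require Import structures.
From mathcomp Require Import all_boot all_order all_algebra.
From Stdlib Require Import ClassicalEpsilon.
Set Implicit Arguments. Unset Strict Implicit. Unset Printing Implicit Defensive.
Import Order.TTheory GRing.Theory Num.Theory.
Local Open Scope ring_scope.

(* The scalar field K is generic here, together with its conjugation [cj]
   and square root [sq]; the theorem instantiates (K,cj,sq) with
   (R, id, Num.sqrt) for any real closed field R, and (C, conj, sqrtC) for
   any numeric algebraically closed field C (e.g. complex numbers). *)
Section Defs.
Variables (K : numFieldType) (cj : K -> K) (sq : K -> K).

Definition adjmx (p q : nat) (A : 'M[K]_(p, q)) : 'M[K]_(q, p) := map_mx cj A^T.

Definition ip (p : nat) (x y : 'cV[K]_p) : K := (adjmx x *m y) 0 0.

Definition ipU (n : nat) (RU : 'M[K]_n) (x y : 'cV[K]_n) : K := ip (RU *m x) y.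
Definition normU (n : nat) (RU : 'M[K]_n) (x : 'cV[K]_n) : K := sq (ipU RU x x).
Definition norm2 (p : nat) (x : 'cV[K]_p) : K := sq (ip x x).

Definition self_adjoint (n : nat) (A : 'M[K]_n) : Prop := adjmx A = A.
Definition pos_def (n : nat) (A : 'M[K]_n) : Prop :=
  forall x : 'cV[K]_n, x != 0 -> 0 < ip x (A *m x).

(* U-orthogonal projection onto V (chosen by classical choice; it exists and is
   unique when R_U is self-adjoint positive definite) *)
Definition projU (n : nat) (RU : 'M[K]_n) (V : {vspace 'cV[K]_n}) (x : 'cV[K]_n)
  : 'cV[K]_n :=
  epsilon (inhabits 0)
    (fun p => p \in V /\ forall w, w \in V -> ipU RU w (x - p) = 0).

Definition projTh (n k : nat) (Th : 'M[K]_(k, n)) (V : {vspace 'cV[K]_n})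
  (x : 'cV[K]_n) : 'cV[K]_n :=
  epsilon (inhabits 0)
    (fun p => p \in V /\ forall w, w \in V ->
       norm2 (Th *m (x - p)) <= norm2 (Th *m (x - w))).

Definition eps_embedding (n k : nat) (RU : 'M[K]_n) (Th : 'M[K]_(k, n)) (eps : K)
  (V : {vspace 'cV[K]_n}) : Prop :=
  forall x y, x \in V -> y \in V ->
    `|ipU RU x y - ip (Th *m x) (Th *m y)| <= eps * normU RU x * normU RU y.

Definition snapmx (n m : nat) (u : 'I_m -> 'cV[K]_n) : 'M[K]_(n, m) :=
  \matrix_(j < n, i < m) u i j 0.
Definition snapspace (n m : nat) (u : 'I_m -> 'cV[K]_n) : {vspace 'cV[K]_n} :=
  (\sum_(i < m) <[u i]>)%VS.

Definition proj_err (n m : nat) (RU : 'M[K]_n) (u : 'I_m -> 'cV[K]_n)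
  (W : {vspace 'cV[K]_n}) : K :=
  \sum_(i < m) normU RU (u i - projU RU W (u i)) ^+ 2.

Definition DeltaPOD (n m k : nat) (Th : 'M[K]_(k, n)) (u : 'I_m -> 'cV[K]_n)
  (V : {vspace 'cV[K]_n}) : K :=
  m%:R^-1 * \sum_(i < m) norm2 (Th *m (u i - projTh Th V (u i))) ^+ 2.

Definition sketched_eigenpairs (n m k : nat) (Th : 'M[K]_(k, n))
  (u : 'I_m -> 'cV[K]_n) (l : nat) (lam : nat -> K) (t : nat -> 'cV[K]_m) : Prop :=
  let G := adjmx (Th *m snapmx u) *m (Th *m snapmx u) in
  [/\ l = \rank (Th *m snapmx u),
      forall i, (i < l)%N -> G *m t i = lam i *: t i /\ lam i != 0,
      forall i j, (i < l)%N -> (j < l)%N -> ip (t i) (t j) = (i == j)%:R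
    & forall i j, (i <= j)%N -> (j < l)%N -> lam j <= lam i].

Definition sketched_space (n m : nat) (u : 'I_m -> 'cV[K]_n) (t : nat -> 'cV[K]_m)
  (r : nat) : {vspace 'cV[K]_n} :=
  (\sum_(i < r) <[snapmx u *m t i]>)%VS.

Definition thm54_statement : Prop :=
  forall (n m k : nat) (RU : 'M[K]_n) (u : 'I_m -> 'cV[K]_n) (Th : 'M[K]_(k, n))
    (eps : K) (r : nat) (Ustar : {vspace 'cV[K]_n})
    (l : nat) (lam : nat -> K) (t : nat -> 'cV[K]_m),
  self_adjoint RU -> pos_def RU ->
  0 <= eps -> eps < 1 -> (0 < r)%N ->
  (Ustar <= snapspace u)%VS -> \dim Ustar = r ->
  (forall W : {vspace 'cV[K]_n}, (W <= snapspace u)%VS -> \dim W = r ->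
      proj_err RU u Ustar <= proj_err RU u W) ->
  sketched_eigenpairs Th u l lam t -> (r <= l)%N ->
  let Ur := sketched_space u t r in
  let errUr := m%:R^-1 * proj_err RU u Ur in
  let errStar := m%:R^-1 * proj_err RU u Ustar in
  (forall Y : {vspace 'cV[K]_n},
      (Y <= snapspace u)%VS -> (r <= \dim Y)%N ->
      eps_embedding RU Th eps Y ->
      (forall i, eps_embedding RU Th eps <[u i - projU RU Y (u i)]>%VS) ->
      (forall i, eps_embedding RU Th eps <[u i - projU RU Ustar (u i)]>%VS) ->
      let DY := m%:R^-1 * proj_err RU u Y in
      errUr <= 2 / (1 - eps) * DeltaPOD Th u Ur
               + (2 * (1 + eps) / (1 - eps) + 1) * DY
      /\ 2 / (1 - eps) * DeltaPOD Th u Ur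
               + (2 * (1 + eps) / (1 - eps) + 1) * DY
         <= 2 * (1 + eps) / (1 - eps) * errStar
               + (2 * (1 + eps) / (1 - eps) + 1) * DY)
  /\
  (eps_embedding RU Th eps (snapspace u) -> (r <= \dim (snapspace u))%N ->
      errUr <= (1 - eps)^-1 * DeltaPOD Th u Ur
      /\ (1 - eps)^-1 * DeltaPOD Th u Ur <= (1 + eps) / (1 - eps) * errStar).

End Defs.

(* Let A := Th U_m be the sketched snapshot matrix, T_r := [t_1, ..., t_r] and
   C := I - T_r T_r^H.  The sketched projection of u^i onto U_r is U_m T_r T_r^H e_i,
   so m Delta^POD(U_r) = ||A C||_F^2, and since U_m T_r T_r^H e_i lies in U_r, m times
   the error of U_r is at most ||U_m C||_{U,F}^2.  By Ky Fan's maximum principle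
   ||A C||_F^2 = ||A||_F^2 - (lam_1 + ... + lam_r) <= ||A - M Z||_F^2 whenever
   rank M <= r; choosing M Z := Th [P_{U_r^*} u^i]_i and applying the embedding to
   the residuals u^i - P_{U_r^*} u^i bounds Delta^POD(U_r) by (1 + eps) times the
   error of U_r^*.  The embedding also converts ||U_m C||_{U,F} into ||A C||_F:
   directly on U_m for (ii); for (i) after the U-orthogonal splitting
   u^i = P_Y u^i + (u^i - P_Y u^i) and the parallelogram law. *)

From mathcomp Require Import all_boot all_order all_algebra.
From Stdlib Require Import ClassicalEpsilon.
From mathcomp Require Import ring.
Set Implicit Arguments. Unset Strict Implicit. Unset Printing Implicit Defensive.
Import Order.TTheory GRing.Theory Num.Theory.
Local Open Scope ring_scope.

Section ScalarsWithConjugation.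
Variables (K : numFieldType) (cj : {rmorphism K -> K}) (sq : K -> K).
Hypothesis cjK : involutive cj.
Hypothesis cj_ge0 : forall x, 0 <= x -> cj x = x.
Hypothesis mul_cj_ge0 : forall x, 0 <= cj x * x.
Hypothesis mul_cj_eq0 : forall x, cj x * x = 0 -> x = 0.
Hypothesis sq_ge0 : forall x, 0 <= x -> 0 <= sq x.
Hypothesis sqK : forall x, 0 <= x -> sq x ^+ 2 = x.

Local Notation adj := (adjmx cj).

Lemma adjmxM p q s (A : 'M[K]_(p, q)) (B : 'M[K]_(q, s)) :
  adj (A *m B) = adj B *m adj A.
Proof. by rewrite /adjmx trmx_mul map_mxM. Qed.

Lemma adjmxK p q (A : 'M[K]_(p, q)) : adj (adj A) = A.
Proof. by apply/matrixP => i j; rewrite !mxE cjK. Qed.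

Lemma adjmxD p q (A B : 'M[K]_(p, q)) : adj (A + B) = adj A + adj B.
Proof. by apply/matrixP => i j; rewrite !mxE rmorphD. Qed.

Lemma adjmxN p q (A : 'M[K]_(p, q)) : adj (- A) = - adj A.
Proof. by apply/matrixP => i j; rewrite !mxE rmorphN. Qed.

Lemma adjmxB p q (A B : 'M[K]_(p, q)) : adj (A - B) = adj A - adj B.
Proof. by rewrite adjmxD adjmxN. Qed.

Lemma adjmx1 p : adj (1%:M : 'M[K]_p) = 1%:M.
Proof. by apply/matrixP => i j; rewrite !mxE rmorphMn rmorph1 eq_sym. Qed.

Lemma mxtrace_adjmx p (M : 'M[K]_p) : cj (\tr M) = \tr (adj M).
Proof.
by rewrite /mxtrace rmorph_sum; apply: eq_bigr => i _; rewrite !mxE.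
Qed.

Lemma col_mulmx p q s (A : 'M[K]_(p, q)) (B : 'M[K]_(q, s)) i :
  col i (A *m B) = A *m col i B.
Proof. by rewrite !colE mulmxA. Qed.

Lemma mulmx_col_sum p q (X : 'M[K]_(p, q)) (c : 'cV_q) :
  X *m c = \sum_i c i 0 *: col i X.
Proof.
apply/matrixP => a b; rewrite (ord1 b) !mxE summxE.
by apply: eq_bigr => i _; rewrite !mxE mulrC.
Qed.

Lemma col_mul_diag p q (M : 'M[K]_(p, q)) (d : 'rV[K]_q) j :
  col j (M *m diag_mx d) = d 0 j *: col j M.
Proof. by apply/matrixP => a b; rewrite mul_mx_diag !mxE mulrC. Qed.

Lemma col_snapmx p q (v : 'I_q -> 'cV[K]_p) i : col i (snapmx v) = v i.
Proof. by apply/matrixP => a b; rewrite (ord1 b) !mxE. Qed.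

Lemma eq_col_mx p q (A B : 'M[K]_(p, q)) : (forall j, col j A = col j B) -> A = B.
Proof.
by move=> eqAB; apply/matrixP => a j; have /matrixP/(_ a 0) := eqAB j; rewrite !mxE.
Qed.

Lemma ipE p (x y : 'cV[K]_p) : ip cj x y = \sum_i cj (x i 0) * y i 0.
Proof. by rewrite /ip mxE; apply: eq_bigr => i _; rewrite !mxE. Qed.

Lemma ip_col p q (X : 'M[K]_(p, q)) (y : 'cV_p) i :
  ip cj (col i X) y = (adj X *m y) i 0.
Proof. by rewrite /ip !mxE; apply: eq_bigr => j _; rewrite !mxE. Qed.

Lemma ip_ge0 p (x : 'cV[K]_p) : 0 <= ip cj x x.
Proof. by rewrite ipE; apply: sumr_ge0 => i _. Qed.

Lemma ip_eq0 p (x : 'cV[K]_p) : ip cj x x = 0 -> x = 0.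
Proof.
rewrite ipE => /psumr_eq0P x0; apply/matrixP => i j.
by rewrite (ord1 j) mxE; apply: mul_cj_eq0; apply: x0.
Qed.

Lemma pos_def1 p : pos_def cj (1%:M : 'M[K]_p).
Proof.
move=> x x_neq0; rewrite mul1mx lt_def ip_ge0 andbT.
by apply: contraNneq x_neq0 => /ip_eq0 ->.
Qed.

Lemma norm2_sqr p (x : 'cV[K]_p) : norm2 cj sq x ^+ 2 = ip cj x x.
Proof. by rewrite /norm2 sqK // ip_ge0. Qed.

Lemma ler_sq a b : 0 <= a -> 0 <= b -> (sq a <= sq b) = (a <= b).
Proof.
move=> a0 b0; rewrite -(ler_pXn2r (n := 2)) ?nnegrE ?sq_ge0 //.
by rewrite !sqK.
Qed.

Definition frob p q (R : 'M[K]_p) (X Y : 'M[K]_(p, q)) : K :=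
  \tr (adj X *m (R *m Y)).

Lemma frob1 p q (X Y : 'M[K]_(p, q)) : frob 1%:M X Y = \tr (adj X *m Y).
Proof. by rewrite /frob mul1mx. Qed.

Section FrobeniusForm.
Variables (p : nat) (R : 'M[K]_p).

Lemma frobDl q (X Y Z : 'M[K]_(p, q)) : frob R (X + Y) Z = frob R X Z + frob R Y Z.
Proof. by rewrite /frob adjmxD mulmxDl mxtraceD. Qed.

Lemma frobDr q (X Y Z : 'M[K]_(p, q)) : frob R Z (X + Y) = frob R Z X + frob R Z Y.
Proof. by rewrite /frob !mulmxDr mxtraceD. Qed.

Lemma frobBl q (X Y Z : 'M[K]_(p, q)) : frob R (X - Y) Z = frob R X Z - frob R Y Z.
Proof. by rewrite /frob adjmxB mulmxBl linearB. Qed.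

Lemma frobBr q (X Y Z : 'M[K]_(p, q)) : frob R Z (X - Y) = frob R Z X - frob R Z Y.
Proof. by rewrite /frob !mulmxBr linearB. Qed.

Lemma frob_parallelogram q (X Y : 'M[K]_(p, q)) :
  frob R (X - Y) (X - Y) + frob R (X + Y) (X + Y) = 2 * frob R X X + 2 * frob R Y Y.
Proof. by rewrite !frobBl !frobDl !frobBr !frobDr; ring. Qed.

Lemma frob_col q (X Y : 'M[K]_(p, q)) :
  frob R X Y = \sum_i ip cj (col i X) (R *m col i Y).
Proof.
rewrite /frob /mxtrace; apply: eq_bigr => i _.
by rewrite ip_col -!col_mulmx !mxE.
Qed.

Lemma frob_mulmxr q (X Y : 'M[K]_(p, q)) (C : 'M[K]_q) :
  frob R (X *m C) (Y *m C) = \tr (adj X *m (R *m Y) *m (C *m adj C)).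
Proof. by rewrite /frob adjmxM -!mulmxA mxtrace_mulC !mulmxA. Qed.

Hypothesis R_sa : self_adjoint cj R.

Lemma frob_conj q (X Y : 'M[K]_(p, q)) : cj (frob R X Y) = frob R Y X.
Proof. by rewrite /frob mxtrace_adjmx !adjmxM adjmxK R_sa mulmxA. Qed.

Lemma frob_pyth q (X Y : 'M[K]_(p, q)) : frob R X Y = 0 ->
  frob R (X + Y) (X + Y) = frob R X X + frob R Y Y.
Proof.
move=> XY0; have YX0 : frob R Y X = 0 by rewrite -frob_conj XY0 rmorph0.
by rewrite frobDl !frobDr XY0 YX0 add0r addr0.
Qed.

Lemma ipU_frob (x y : 'cV_p) : ipU cj R x y = frob R x y.
Proof. by rewrite /ipU /frob /mxtrace big_ord1 /ip adjmxM R_sa mulmxA. Qed.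

Lemma ipUE (x y : 'cV_p) : ipU cj R x y = ip cj x (R *m y).
Proof. by rewrite /ipU /ip adjmxM R_sa mulmxA. Qed.

Hypothesis R_pd : pos_def cj R.

Lemma ip_mul_ge0 (x : 'cV_p) : 0 <= ip cj x (R *m x).
Proof.
have [->|x_neq0] := eqVneq x 0; last exact: ltW (R_pd x_neq0).
by rewrite mulmx0 ipE big1 // => i _; rewrite mxE mulr0.
Qed.

Lemma frob_ge0 q (X : 'M[K]_(p, q)) : 0 <= frob R X X.
Proof. by rewrite frob_col; apply: sumr_ge0 => i _; apply: ip_mul_ge0. Qed.

Lemma ipU_ge0 (x : 'cV_p) : 0 <= ipU cj R x x.
Proof. by rewrite ipU_frob frob_ge0. Qed.

Lemma normU_sqr (x : 'cV_p) : normU cj sq R x ^+ 2 = ipU cj R x x.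
Proof. by rewrite /normU sqK // ipU_ge0. Qed.

Lemma frob_snapmx q (v : 'I_q -> 'cV[K]_p) :
  frob R (snapmx v) (snapmx v) = \sum_i normU cj sq R (v i) ^+ 2.
Proof.
rewrite frob_col; apply: eq_bigr => i _.
by rewrite normU_sqr ipU_frob frob_col big_ord1 col_snapmx !col_id.
Qed.

End FrobeniusForm.

Lemma ip_frob1 p (x y : 'cV[K]_p) : ip cj x y = frob 1%:M x y.
Proof. by rewrite frob1 /mxtrace big_ord1. Qed.

Lemma frob1_ge0 p q (X : 'M[K]_(p, q)) : 0 <= frob 1%:M X X.
Proof. exact/frob_ge0/pos_def1. Qed.

Lemma frob1_eq0 p q (X : 'M[K]_(p, q)) : frob 1%:M X X = 0 -> X = 0.
Proof.
rewrite frob_col => /psumr_eq0P X0; apply: eq_col_mx => i.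
have /(_ i isT) := X0 (fun j _ => ip_mul_ge0 (@pos_def1 p) _).
by rewrite mul1mx col0 => /ip_eq0.
Qed.

Definition orthoproj p (Q : 'M[K]_p) : Prop := adj Q = Q /\ Q *m Q = Q.

Lemma orthoprojC p (Q : 'M[K]_p) : orthoproj Q -> orthoproj (1%:M - Q).
Proof.
case=> Q_sa Q_idem; split; first by rewrite adjmxB adjmx1 Q_sa.
by rewrite mulmxBl mul1mx mulmxBr mulmx1 Q_idem subrr subr0.
Qed.

Lemma frob_mulmx_orthoproj p q (R : 'M[K]_p) (X : 'M[K]_(p, q)) (C : 'M[K]_q) :
  orthoproj C -> frob R (X *m C) (X *m C) = \tr (adj X *m (R *m X) *m C).
Proof. by case=> C_sa C_idem; rewrite frob_mulmxr C_sa C_idem. Qed.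

Lemma frob_mulmx_orthoproj_le p q (R : 'M[K]_p) (X : 'M[K]_(p, q)) (C : 'M[K]_q) :
  pos_def cj R -> orthoproj C -> frob R (X *m C) (X *m C) <= frob R X X.
Proof.
move=> R_pd C_op; rewrite frob_mulmx_orthoproj // -subr_ge0.
have -> : frob R X X - \tr (adj X *m (R *m X) *m C)
          = \tr (adj X *m (R *m X) *m (1%:M - C)).
  by rewrite mulmxBr mulmx1 linearB.
by rewrite -frob_mulmx_orthoproj; [apply: frob_ge0 | apply: orthoprojC].
Qed.

Lemma frob1_orthoproj_mulmx p q (Q : 'M[K]_p) (X : 'M[K]_(p, q)) : orthoproj Q ->
  frob 1%:M (Q *m X) (Q *m X) = \tr (adj X *m (Q *m X)).
Proof. by case=> Q_sa Q_idem; rewrite frob1 adjmxM Q_sa -mulmxA (mulmxA Q) Q_idem. Qed.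

Lemma frob1_orthoproj_mulmx_le p q (Q : 'M[K]_p) (X : 'M[K]_(p, q)) : orthoproj Q ->
  frob 1%:M (Q *m X) (Q *m X) <= frob 1%:M X X.
Proof.
move=> Q_op; rewrite frob1_orthoproj_mulmx // -subr_ge0.
have -> : frob 1%:M X X - \tr (adj X *m (Q *m X)) = \tr (adj X *m ((1%:M - Q) *m X)).
  by rewrite frob1 mulmxBl mul1mx mulmxBr linearB.
by rewrite -frob1_orthoproj_mulmx; [apply: frob1_ge0 | apply: orthoprojC].
Qed.

Lemma inj_row_free_tr p q (V : 'M[K]_(p, q)) :
  (forall c : 'cV_q, V *m c = 0 -> c = 0) -> row_free V^T.
Proof.
move=> V_inj; rewrite -kermx_eq0; apply/eqP/row_matrixP => i.
rewrite row0; apply: trmx_inj; rewrite trmx0; apply: V_inj.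
have /(congr1 (row i)) := mulmx_ker V^T; rewrite row_mul row0 => /(congr1 trmx).
by rewrite trmx_mul trmxK trmx0.
Qed.

Lemma inj_rank p q (V : 'M[K]_(p, q)) :
  (forall c : 'cV_q, V *m c = 0 -> c = 0) -> \rank V = q.
Proof. by move=> /inj_row_free_tr /eqP; rewrite mxrank_tr. Qed.

Section WeightedProjector.
Variables (p d : nat) (R : 'M[K]_p) (B : 'M[K]_(p, d)).
Hypothesis R_pd : pos_def cj R.
Hypothesis B_inj : forall c : 'cV_d, B *m c = 0 -> c = 0.

Local Notation gram := (adj B *m R *m B).

Definition projmx : 'M[K]_p := B *m (invmx gram *m adj B *m R).

Lemma gram_unitmx : gram \in unitmx.
Proof.
rewrite -unitmx_tr -row_free_unit; apply: inj_row_free_tr => c gram_c.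
apply: B_inj; apply/eqP; apply: contraT => Bc_neq0.
have := R_pd Bc_neq0; rewrite /ip adjmxM.
have -> : adj c *m adj B *m (R *m (B *m c)) = adj c *m (gram *m c) by rewrite !mulmxA.
by rewrite gram_c mulmx0 mxE ltxx.
Qed.

Lemma projmx_fix : projmx *m B = B.
Proof. by rewrite /projmx -!mulmxA [adj B *m _]mulmxA mulVmx ?gram_unitmx // mulmx1. Qed.

Lemma projmx_orth : adj B *m R *m (1%:M - projmx) = 0.
Proof.
by rewrite mulmxBr mulmx1 /projmx !mulmxA mulmxV ?gram_unitmx // mul1mx subrr.
Qed.

End WeightedProjector.

Lemma orthoproj_projmx1 p d (B : 'M[K]_(p, d)) :
  (forall c : 'cV_d, B *m c = 0 -> c = 0) ->
  orthoproj (projmx 1%:M B) /\ \tr (projmx 1%:M B) = d%:R.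
Proof.
move=> B_inj; set Q := projmx 1%:M B.
have Q_fix : Q *m B = B := projmx_fix (@pos_def1 p) B_inj.
have Q_idem : Q *m Q = Q by rewrite {2}/Q /projmx mulmxA Q_fix.
have Q_orth : adj Q *m (1%:M - Q) = 0.
  by rewrite /Q {1}/projmx adjmxM -mulmxA -[adj B]mulmx1 (projmx_orth (@pos_def1 p) B_inj) mulmx0.
have Q_herm : adj Q = adj Q *m Q.
  by apply/eqP; rewrite -subr_eq0 -{1}[adj Q]mulmx1 -mulmxBr Q_orth.
split; first split => //.
  by rewrite Q_herm -[Q in _ *m Q]adjmxK -adjmxM -Q_herm adjmxK.
have gram_unit := gram_unitmx (@pos_def1 p) B_inj.
rewrite (_ : \tr Q = \tr (invmx (adj B *m 1%:M *m B) *m (adj B *m 1%:M *m B))).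
  by rewrite mulVmx ?mxtrace1.
by rewrite /Q /projmx mxtrace_mulC !mulmxA.
Qed.

Definition basismx p (V : {vspace 'cV[K]_p}) : 'M[K]_(p, \dim V) :=
  snapmx (fun i : 'I_(\dim V) => (vbasis V)`_i).

Lemma basismx_inj p (V : {vspace 'cV[K]_p}) (c : 'cV_(\dim V)) :
  basismx V *m c = 0 -> c = 0.
Proof.
rewrite mulmx_col_sum => c0; apply/colP => i; rewrite mxE.
have c0' : \sum_j c j 0 *: (vbasis V)`_j = 0.
  by rewrite -[RHS]c0; apply: eq_bigr => j _; rewrite col_snapmx.
by move: (basis_free (vbasisP V)) => /freeP /(_ (fun j => c j 0) c0') ->.
Qed.

Lemma basismx_mem p (V : {vspace 'cV[K]_p}) (c : 'cV_(\dim V)) : basismx V *m c \in V.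
Proof.
rewrite mulmx_col_sum; apply: memv_suml => i _; rewrite col_snapmx.
by apply/memvZ/vbasis_mem/mem_nth; rewrite size_tuple.
Qed.

Lemma basismx_factor p q (V : {vspace 'cV[K]_p}) (W : 'M[K]_(p, q)) :
  (forall j, col j W \in V) -> exists Z, W = basismx V *m Z.
Proof.
move=> WV; exists (\matrix_(i, j) coord (vbasis V) i (col j W)).
apply: eq_col_mx => j; rewrite col_mulmx mulmx_col_sum {1}(coord_vbasis (WV j)).
by apply: eq_bigr => i _; rewrite col_snapmx !mxE.
Qed.

Lemma col_mulmx_mem p q s (V : {vspace 'cV[K]_p}) (X : 'M[K]_(p, q)) (C : 'M[K]_(q, s)) :
  (forall j, col j X \in V) -> forall j, col j (X *m C) \in V.
Proof.
move=> XV j; rewrite col_mulmx mulmx_col_sum.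
by apply: memv_suml => i _; apply: memvZ.
Qed.

Section OrthogonalProjection.
Variables (p : nat) (R : 'M[K]_p).
Hypotheses (R_sa : self_adjoint cj R) (R_pd : pos_def cj R).

Lemma projU_spec (V : {vspace 'cV[K]_p}) x :
  projU cj R V x \in V /\ forall w, w \in V -> ipU cj R w (x - projU cj R V x) = 0.
Proof.
apply: (epsilon_spec (inhabits 0)
  (fun y => y \in V /\ forall w, w \in V -> ipU cj R w (x - y) = 0)).
exists (projmx R (basismx V) *m x); split.
  by rewrite /projmx -!mulmxA basismx_mem.
move=> w wV; have [|c ->] := @basismx_factor _ 1 V w.
  by move=> j; rewrite (ord1 j) col_id.
set B := basismx V; rewrite /ipU /ip !adjmxM R_sa.
have -> : adj c *m adj B *m R *m (x - projmx R B *m x)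
          = adj c *m (adj B *m R *m (1%:M - projmx R B)) *m x.
  by rewrite !mulmxBr !mulmxBl mulmx1 !mulmxA.
by rewrite projmx_orth // ?mulmx0 ?mul0mx ?mxE //; apply: basismx_inj.
Qed.

Lemma projU_mem (V : {vspace 'cV[K]_p}) x : projU cj R V x \in V.
Proof. by case: (projU_spec V x). Qed.

Lemma projU_orth (V : {vspace 'cV[K]_p}) x w :
  w \in V -> frob R w (x - projU cj R V x) = 0.
Proof. by move=> wV; rewrite -ipU_frob //; case: (projU_spec V x) => _ ->. Qed.

Lemma projU_min (V : {vspace 'cV[K]_p}) x w : w \in V ->
  ipU cj R (x - projU cj R V x) (x - projU cj R V x) <= ipU cj R (x - w) (x - w).
Proof.
move=> wV; set y := projU cj R V x.
have yw_V : y - w \in V by rewrite memvB // projU_mem.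
have -> : x - w = (y - w) + (x - y) by rewrite [RHS]addrC addrA subrK.
by rewrite !ipU_frob // (frob_pyth R_sa (projU_orth x yw_V)) lerDr; apply: frob_ge0.
Qed.

End OrthogonalProjection.

Lemma mxtrace_orthoproj_mul_le p (Q N : 'M[K]_p) :
  orthoproj Q -> orthoproj N -> \tr (Q *m N) <= \tr Q.
Proof.
move=> Q_op N_op; have [Q_sa Q_idem] := Q_op.
rewrite -subr_ge0 -linearB /= -{1}[Q]mulmx1 -mulmxBr.
have -> : \tr (Q *m (1%:M - N)) = frob 1%:M ((1%:M - N) *m Q) ((1%:M - N) *m Q).
  rewrite (frob1_orthoproj_mulmx _ (orthoprojC N_op)) Q_sa.
  by rewrite mxtrace_mulC [RHS]mxtrace_mulC -mulmxA Q_idem.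
exact: frob1_ge0.
Qed.

Lemma mxtrace_adj_mul_coisometry k m p (A : 'M[K]_(k, m)) (T : 'M[K]_(m, p)) Q :
  A = A *m (T *m adj T) -> adj T *m T = 1%:M ->
  \tr (adj A *m (Q *m A)) = \tr (adj (A *m T) *m (Q *m (A *m T))).
Proof.
move=> AE T_iso; rewrite {1 2}AE !adjmxM adjmxK !mulmxA mxtrace_mulC.
by rewrite !mulmxA T_iso mul1mx.
Qed.

Lemma frob1_sub_lowrank_ge k m d (A : 'M[K]_(k, m)) (Q : 'M[K]_k)
    (M : 'M[K]_(k, d)) (Z : 'M[K]_(d, m)) :
  orthoproj Q -> Q *m M = M ->
  frob 1%:M A A - \tr (adj A *m (Q *m A)) <= frob 1%:M (A - M *m Z) (A - M *m Z).
Proof.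
move=> Q_op QM; have [Q_sa Q_idem] := Q_op; have [QC_sa _] := orthoprojC Q_op.
have -> : A - M *m Z = (1%:M - Q) *m A + Q *m (A - M *m Z).
  by rewrite mulmxBr mulmxA QM mulmxBl mul1mx addrA subrK.
have orth : frob 1%:M ((1%:M - Q) *m A) (Q *m (A - M *m Z)) = 0.
  rewrite frob1 adjmxM QC_sa -mulmxA (mulmxA _ Q) mulmxBl mul1mx Q_idem subrr.
  by rewrite mul0mx mulmx0 linear0.
rewrite (frob_pyth (adjmx1 k) orth).
rewrite (frob1_orthoproj_mulmx _ (orthoprojC Q_op)) mulmxBl mul1mx mulmxBr linearB /=.
by rewrite [frob 1%:M A A]frob1 lerDl; apply: frob1_ge0.
Qed.

Lemma ler_sum_prefix (l r : nat) (lam a : nat -> K) :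
  (0 < r)%N -> (r <= l)%N ->
  (forall i, (i < l)%N -> 0 < lam i) ->
  (forall i j, (i <= j)%N -> (j < l)%N -> lam j <= lam i) ->
  (forall i, (i < l)%N -> 0 <= a i <= lam i) ->
  \sum_(i < l) a i / lam i <= r%:R -> \sum_(i < l) a i <= \sum_(i < r) lam i.
Proof.
move=> r_gt0 le_rl lam_gt0 lam_dec a_bnd sum_ratio.
pose ind i : K := (i < r)%N%:R.
have widen (F : nat -> K) : \sum_(i < r) F i = \sum_(i < l) ind i * F i.
  rewrite (big_ord_widen _ _ le_rl) big_mkcond; apply: eq_bigr => i _.
  by rewrite /ind; case: ifP; rewrite ?mul1r ?mul0r.
have sum_ind : \sum_(i < l) ind i = r%:R.
  have := widen (fun=> 1); rewrite sumr_const card_ord => ->.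
  by apply: eq_bigr => i _; rewrite mulr1.
pose mu := lam r.-1.
have mu_ge0 : 0 <= mu by rewrite ltW // lam_gt0 // (leq_trans _ le_rl) // prednK.
(* with [mu] the [r]-th largest weight, the bound holds termwise *)
have termwise (i : 'I_l) : a i - ind i * lam i <= mu * (a i / lam i - ind i).
  have lam_i_gt0 := lam_gt0 i (ltn_ord i); have /andP[a_ge0 a_le] := a_bnd i (ltn_ord i).
  have a_E : a i = a i / lam i * lam i by rewrite divfK ?gt_eqF.
  rewrite -subr_ge0; set c := a i / lam i; rewrite [a i]a_E -/c.
  rewrite /ind; case: ltnP => [lt_ir|le_ri] /=.
  - have -> : mu * (c - 1) - (c * lam i - 1 * lam i) = (lam i - mu) * (1 - c).
      by ring.
    apply: mulr_ge0; rewrite subr_ge0; first by rewrite lam_dec // -ltnS prednK.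
    by rewrite /c ler_pdivrMr // mul1r.
  - have -> : mu * (c - 0) - (c * lam i - 0 * lam i) = c * (mu - lam i) by ring.
    apply: mulr_ge0; first by rewrite divr_ge0 // ltW.
    by rewrite subr_ge0 lam_dec // (leq_trans (leq_pred r)).
have : \sum_(i < l) (a i - ind i * lam i) <= \sum_(i < l) mu * (a i / lam i - ind i).
  by apply: ler_sum => i _; apply: termwise.
rewrite sumrB -mulr_sumr sumrB -widen sum_ind => le_sum.
rewrite -subr_le0; apply: le_trans le_sum _.
by rewrite mulr_ge0_le0 // subr_le0.
Qed.

Lemma orthoproj_sandwich p q (V : 'M[K]_(p, q)) (D : 'M[K]_q) :
  adj D = D -> D *m (adj V *m V) *m D = D -> orthoproj (V *m D *m adj V).
Proof.
move=> D_sa DVVD; split; first by rewrite !adjmxM adjmxK D_sa mulmxA.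
by rewrite -!mulmxA (mulmxA (adj V)) (mulmxA D) (mulmxA _ D) DVVD.
Qed.

Lemma col_base_factor k d (M : 'M[K]_(k, d)) :
  exists B : 'M[K]_(k, \rank M^T),
    (forall c : 'cV_(\rank M^T), B *m c = 0 -> c = 0) /\ exists D, M = B *m D.
Proof.
exists (row_base M^T)^T; split.
  move=> c /(congr1 trmx); rewrite trmx_mul trmxK trmx0 => /eqP.
  by rewrite mulmx_free_eq0 ?row_base_free // -trmx0 => /eqP/trmx_inj.
have /submxP[D MD] : (M^T <= row_base M^T)%MS by rewrite eq_row_base.
by exists D^T; rewrite -trmx_mul -MD trmxK.
Qed.

Lemma ip_pyth p (x y : 'cV[K]_p) :
  ip cj x y = 0 -> ip cj (x + y) (x + y) = ip cj x x + ip cj y y.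
Proof. by rewrite !ip_frob1; apply: frob_pyth; apply: adjmx1. Qed.

Lemma projTh_sqr_eq p k (Th : 'M[K]_(k, p)) (V : {vspace 'cV[K]_p}) x y :
  y \in V -> (forall w, w \in V -> ip cj (Th *m (x - y)) (Th *m (y - w)) = 0) ->
  norm2 cj sq (Th *m (x - projTh cj sq Th V x)) ^+ 2 = ip cj (Th *m (x - y)) (Th *m (x - y)).
Proof.
move=> yV y_orth.
have dist_sqr w : w \in V -> ip cj (Th *m (x - w)) (Th *m (x - w))
    = ip cj (Th *m (x - y)) (Th *m (x - y)) + ip cj (Th *m (y - w)) (Th *m (y - w)).
  by move=> wV; rewrite -ip_pyth ?y_orth // -mulmxDr addrA subrK.
have [zV z_min] : projTh cj sq Th V x \in V /\ forall w, w \in V ->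
    norm2 cj sq (Th *m (x - projTh cj sq Th V x)) <= norm2 cj sq (Th *m (x - w)).
  apply: (epsilon_spec (inhabits 0) (fun z => z \in V /\ forall w, w \in V ->
     norm2 cj sq (Th *m (x - z)) <= norm2 cj sq (Th *m (x - w)))).
  exists y; split => // w wV.
  by rewrite ler_sq ?ip_ge0 // (dist_sqr w wV) lerDl ip_ge0.
rewrite norm2_sqr; apply/eqP; rewrite eq_le; apply/andP; split.
  by rewrite -ler_sq ?ip_ge0 // z_min.
by rewrite (dist_sqr _ zV) lerDl ip_ge0.
Qed.

Section Embedding.
Variables (n k : nat) (RU : 'M[K]_n) (Th : 'M[K]_(k, n)) (eps : K).
Hypotheses (RU_sa : self_adjoint cj RU) (RU_pd : pos_def cj RU).

Lemma eps_embedding_bounds V x : eps_embedding cj sq RU Th eps V -> x \in V ->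
  (1 - eps) * ipU cj RU x x <= ip cj (Th *m x) (Th *m x) <= (1 + eps) * ipU cj RU x x.
Proof.
move=> emb xV; have := emb x x xV xV; rewrite -mulrA -expr2 normU_sqr //.
set a := ipU cj RU x x; set b := ip cj (Th *m x) (Th *m x).
have real_ab : a - b \is Num.real by rewrite rpredB // ger0_real ?ipU_ge0 ?ip_ge0.
move=> dist_ab; rewrite mulrBl mulrDl mul1r lerBlDr.
by rewrite (real_ler_distlDr real_ab dist_ab) (real_ler_distlCDr real_ab dist_ab).
Qed.

Lemma frob_eps_embedding q (X : 'M[K]_(n, q)) (V : 'I_q -> {vspace 'cV[K]_n}) :
  (forall j, eps_embedding cj sq RU Th eps (V j)) -> (forall j, col j X \in V j) ->
  (1 - eps) * frob RU X X <= frob 1%:M (Th *m X) (Th *m X) <= (1 + eps) * frob RU X X.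
Proof.
move=> emb XV; rewrite !frob_col !mulr_sumr; apply/andP; split; apply: ler_sum => j _;
  have /andP[lo hi] := eps_embedding_bounds (emb j) (XV j);
  by rewrite mul1mx col_mulmx -ipUE.
Qed.

Hypothesis eps_lt1 : eps < 1.

(* Only the columns of [Yb] need to lie in one embedded subspace: the [U]-orthogonal
   remainder [E] is controlled column by column, at the price of the parallelogram law. *)
Lemma frob_orthoproj_split_le q (Yb E : 'M[K]_(n, q)) (C : 'M[K]_q) Y
    (V : 'I_q -> {vspace 'cV[K]_n}) :
  orthoproj C -> adj Yb *m (RU *m E) = 0 ->
  eps_embedding cj sq RU Th eps Y -> (forall j, col j Yb \in Y) ->
  (forall j, eps_embedding cj sq RU Th eps (V j)) -> (forall j, col j E \in V j) ->
  frob RU ((Yb + E) *m C) ((Yb + E) *m C)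
  <= (1 - eps)^-1 * (2 * frob 1%:M (Th *m (Yb + E) *m C) (Th *m (Yb + E) *m C)
                     + 2 * ((1 + eps) * frob RU E E)) + frob RU E E.
Proof.
move=> C_op YbE_orth Y_emb YbY V_emb EV; have [C_sa C_idem] := C_op.
have gap_gt0 : 0 < 1 - eps by rewrite subr_gt0.
rewrite mulmxDl (frob_pyth RU_sa); last by rewrite frob_mulmxr YbE_orth mul0mx linear0.
apply: lerD; last exact: frob_mulmx_orthoproj_le.
rewrite ler_pdivlMl //.
have /andP[lo_Yb _] := frob_eps_embedding (fun=> Y_emb) (col_mulmx_mem C YbY).
apply: le_trans lo_Yb _.
have /andP[_ hi_E] := frob_eps_embedding V_emb EV.
set a := Th *m (Yb + E) *m C; set b := Th *m E *m C.
have -> : Th *m (Yb *m C) = a - b by rewrite /a /b mulmxDr mulmxDl addrK mulmxA.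
apply: (@le_trans _ _ (2 * frob 1%:M a a + 2 * frob 1%:M b b)).
  by rewrite -(frob_parallelogram _ a b) lerDl frob1_ge0.
rewrite lerD2l ler_wpM2l // (le_trans _ hi_E) //.
exact: frob_mulmx_orthoproj_le (@pos_def1 k) C_op.
Qed.

End Embedding.

Lemma snapspace_mem n m (u : 'I_m -> 'cV[K]_n) (c : 'cV_m) : snapmx u *m c \in snapspace u.
Proof.
rewrite mulmx_col_sum; apply: memv_sumr => i _.
by rewrite col_snapmx memvZ ?memv_line.
Qed.

Section SketchedSnapshots.
Variables (n m k : nat) (Th : 'M[K]_(k, n)) (u : 'I_m -> 'cV[K]_n).
Variables (l : nat) (lam : nat -> K) (t : nat -> 'cV[K]_m).
Hypothesis eig : sketched_eigenpairs cj Th u l lam t.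

Local Notation A := (Th *m snapmx u).
Local Notation G := (adj (Th *m snapmx u) *m (Th *m snapmx u)).

Lemma sketch_rank : l = \rank A.
Proof. by case: eig. Qed.

Lemma sketch_eigen i : (i < l)%N -> G *m t i = lam i *: t i /\ lam i != 0.
Proof. by case: eig => _ eigP _ _; apply: eigP. Qed.

Lemma sketch_orthonormal i j : (i < l)%N -> (j < l)%N -> ip cj (t i) (t j) = (i == j)%:R.
Proof. by case: eig => _ _ onP _; apply: onP. Qed.

Lemma sketch_sorted i j : (i <= j)%N -> (j < l)%N -> lam j <= lam i.
Proof. by case: eig => _ _ _ sortP; apply: sortP. Qed.

Definition eigmx p : 'M[K]_(m, p) := snapmx (fun i : 'I_p => t i).

Definition eigvals p : 'rV[K]_p := \row_(i < p) lam i.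

Lemma eigvalE i : (i < l)%N -> ip cj (A *m t i) (A *m t i) = lam i.
Proof.
move=> il; have [eig_i _] := sketch_eigen il.
have -> : ip cj (A *m t i) (A *m t i) = ip cj (t i) (G *m t i).
  by rewrite /ip !adjmxM !mulmxA.
by rewrite eig_i /ip -scalemxAr mxE -/(ip cj (t i) (t i)) sketch_orthonormal // eqxx mulr1.
Qed.

Lemma eigval_gt0 i : (i < l)%N -> 0 < lam i.
Proof.
move=> il; have [_ lam_neq0] := sketch_eigen il.
by rewrite lt_def lam_neq0 -(eigvalE il) ip_ge0.
Qed.

Lemma eigmx_coisometry p : (p <= l)%N -> adj (eigmx p) *m eigmx p = 1%:M.
Proof.
move=> le_pl; apply/matrixP => i j; rewrite !mxE.
rewrite -(sketch_orthonormal (leq_trans (ltn_ord i) le_pl) (leq_trans (ltn_ord j) le_pl)).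
by rewrite ipE; apply: eq_bigr => a _; rewrite !mxE.
Qed.

Lemma gram_eigmx p : (p <= l)%N -> G *m eigmx p = eigmx p *m diag_mx (eigvals p).
Proof.
move=> le_pl; apply: eq_col_mx => j.
rewrite col_mulmx col_mul_diag !col_snapmx mxE.
by case: (sketch_eigen (leq_trans (ltn_ord j) le_pl)).
Qed.

Lemma gram_sketch_eigmx p : (p <= l)%N ->
  adj (A *m eigmx p) *m (A *m eigmx p) = diag_mx (eigvals p).
Proof.
move=> le_pl; rewrite adjmxM -mulmxA [adj A *m _]mulmxA gram_eigmx //.
by rewrite mulmxA eigmx_coisometry // mul1mx.
Qed.

Lemma sketch_eigmx_inj (c : 'cV_l) : A *m eigmx l *m c = 0 -> c = 0.
Proof.
move=> Vc0; have := congr1 (mulmx (adj (A *m eigmx l))) Vc0.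
rewrite mulmxA gram_sketch_eigmx // mulmx0 => /matrixP Dc0; apply/colP => i.
have /eqP := Dc0 i 0; rewrite mul_diag_mx !mxE mulf_eq0.
by have [_ /negPf ->] := sketch_eigen (ltn_ord i); move=> /eqP.
Qed.

(* The first [l] eigenvectors span the row space of [A], since [l = rank A]. *)
Lemma sketch_eigmx_complete : A = A *m (eigmx l *m adj (eigmx l)).
Proof.
set V := A *m eigmx l; set P := eigmx l *m adj (eigmx l).
have rank_V : \rank V^T = l by rewrite mxrank_tr inj_rank //; apply: sketch_eigmx_inj.
have sub_VA : (V^T <= A^T)%MS by rewrite /V trmx_mul submxMl.
have /andP[_ /submxP[D ATE]] : (V^T == A^T)%MS.
  by rewrite -(mxrank_leqif_eq sub_VA).2 rank_V mxrank_tr -sketch_rank.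
have AD : A = V *m D^T by rewrite -[A]trmxK ATE trmx_mul trmxK.
apply/eqP; rewrite -subr_eq0 -{1}[A]mulmx1 -mulmxBr; apply/eqP/frob1_eq0.
have P_sa : adj P = P by rewrite /P adjmxM adjmxK.
have resid_V : adj (A *m (1%:M - P)) *m V = 0.
  rewrite adjmxM adjmxB adjmx1 P_sa /V -mulmxA [adj A *m _]mulmxA gram_eigmx // mulmxA.
  by rewrite mulmxBl mul1mx -(mulmxA _ (adj _)) eigmx_coisometry // mulmx1 subrr mul0mx.
rewrite frob1 {2}(_ : A *m (1%:M - P) = V *m (D^T *m (1%:M - P))).
  by rewrite mulmxA resid_V mul0mx linear0.
by rewrite {1}AD mulmxA.
Qed.

Definition eiginvmx : 'M[K]_l := diag_mx (\row_(j < l) (lam j)^-1).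

Lemma orthoproj_sketch_range :
  orthoproj (A *m eigmx l *m eiginvmx *m adj (A *m eigmx l)).
Proof.
apply: orthoproj_sandwich.
  apply/matrixP => i j; rewrite !mxE rmorphMn.
  have [->|] := eqVneq i j; last by rewrite !mulr0n.
  by rewrite cj_ge0 // invr_ge0 ltW // eigval_gt0.
rewrite gram_sketch_eigmx // mulmx_diag mulmx_diag; congr diag_mx; apply/rowP => j.
by rewrite !mxE mulVf ?mul1r //; case: (sketch_eigen (ltn_ord j)).
Qed.

Variable r : nat.
Hypotheses (r_gt0 : (0 < r)%N) (le_rl : (r <= l)%N).

Lemma mxtrace_sketch_orthoproj_le (Q : 'M[K]_k) : orthoproj Q -> \tr Q <= r%:R ->
  \tr (adj A *m (Q *m A)) <= \sum_(i < r) lam i.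
Proof.
move=> Q_op trQ.
rewrite (mxtrace_adj_mul_coisometry Q sketch_eigmx_complete (eigmx_coisometry (leqnn l))).
set V := A *m eigmx l.
pose a j := ip cj (A *m t j) (Q *m (A *m t j)).
have diagE (j : 'I_l) : (adj V *m (Q *m V)) j j = a j.
  by rewrite /a -(col_snapmx (fun i : 'I_l => t i)) -!col_mulmx ip_col -col_mulmx [RHS]mxE.
have -> : \tr (adj V *m (Q *m V)) = \sum_(j < l) a j.
  by apply: eq_bigr => j _; rewrite diagE.
have aE j : a j = frob 1%:M (Q *m (A *m t j)) (Q *m (A *m t j)).
  by rewrite frob1_orthoproj_mulmx // /a ip_frob1 frob1.
apply: (ler_sum_prefix r_gt0 le_rl eigval_gt0 sketch_sorted).
  move=> j jl; rewrite aE frob1_ge0 /= -(eigvalE jl) ip_frob1.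
  exact: frob1_orthoproj_mulmx_le.
suff -> : \sum_(j < l) a j / lam j = \tr (Q *m (V *m eiginvmx *m adj V)).
  exact: le_trans (mxtrace_orthoproj_mul_le Q_op orthoproj_sketch_range) trQ.
rewrite (mulmxA Q) mxtrace_mulC (mulmxA Q V) (mulmxA (adj V)) /mxtrace.
by apply: eq_bigr => j _; rewrite mul_mx_diag mxE diagE mxE.
Qed.

Definition eigproj : 'M[K]_m := eigmx r *m adj (eigmx r).

Lemma eigproj_eigmx : eigproj *m eigmx r = eigmx r.
Proof. by rewrite /eigproj -mulmxA eigmx_coisometry // mulmx1. Qed.

Lemma orthoproj_eigproj : orthoproj eigproj.
Proof.
split; first by rewrite /eigproj adjmxM adjmxK.
by rewrite {2}/eigproj mulmxA eigproj_eigmx.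
Qed.

Local Notation C := (1%:M - eigproj).

Lemma frob1_sketch_residual :
  frob 1%:M (A *m C) (A *m C) = frob 1%:M A A - \sum_(i < r) lam i.
Proof.
rewrite frob_mulmx_orthoproj; last exact: orthoprojC orthoproj_eigproj.
rewrite mul1mx mulmxBr mulmx1 linearB /= -frob1; congr (_ - _).
rewrite /eigproj (mulmxA G) mxtrace_mulC gram_eigmx // (mulmxA (adj (eigmx r))).
rewrite eigmx_coisometry // mul1mx mxtrace_diag.
by apply: eq_bigr => i _; rewrite mxE.
Qed.

Lemma sketch_residual_min d (M : 'M[K]_(k, d)) (Z : 'M[K]_(d, m)) : (\rank M <= r)%N ->
  frob 1%:M (A *m C) (A *m C) <= frob 1%:M (A - M *m Z) (A - M *m Z).
Proof.
move=> rank_M; have [B [B_inj [D ->]]] := col_base_factor M.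
have [Q_op trQ] := orthoproj_projmx1 B_inj.
have QB : projmx 1%:M B *m B = B := projmx_fix (@pos_def1 k) B_inj.
rewrite frob1_sketch_residual.
apply: le_trans (frob1_sub_lowrank_ge A _ Q_op (_ : _ *m (B *m D) = _)); last first.
  by rewrite mulmxA QB.
rewrite lerB // mxtrace_sketch_orthoproj_le // trQ ler_nat.
by rewrite mxrank_tr (leq_trans _ rank_M) // mxrankM_maxl.
Qed.

Lemma sketch_residual_orth : adj (A *m C) *m (A *m eigmx r) = 0.
Proof.
have [C_sa _] := orthoprojC orthoproj_eigproj.
rewrite adjmxM C_sa -mulmxA (mulmxA (adj A)) gram_eigmx // mulmxA.
by rewrite mulmxBl mul1mx eigproj_eigmx subrr mul0mx.
Qed.

Local Notation Um := (snapmx u).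
Local Notation Ur := (sketched_space u t r).

Lemma sketched_space_mem (c : 'cV_r) : Um *m (eigmx r *m c) \in Ur.
Proof.
rewrite (mulmx_col_sum (eigmx r)) mulmx_sumr; apply: memv_sumr => i _.
by rewrite -scalemxAr col_snapmx memvZ ?memv_line.
Qed.

Lemma sketched_spaceP w : w \in Ur -> exists c : 'cV_r, w = Um *m (eigmx r *m c).
Proof.
move=> /memv_sumP[v v_line ->].
have [f vE] : exists f : 'I_r -> K, forall i, v i = f i *: (Um *m t i).
  apply: (@fin_all_exists _ (fun=> K) (fun i a => v i = a *: (Um *m t i))) => i.
  by have /vlineP[a ->] := v_line i isT; exists a.
exists (\col_i f i); rewrite (mulmx_col_sum (eigmx r)) mulmx_sumr.
by apply: eq_bigr => i _; rewrite vE -scalemxAr col_snapmx mxE.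
Qed.

Lemma snapshot_residualE i :
  u i - Um *m (eigmx r *m col i (adj (eigmx r))) = col i (Um *m C).
Proof. by rewrite mulmxBr mulmx1 linearB /= col_snapmx /eigproj !col_mulmx. Qed.

Lemma projTh_sketched i :
  norm2 cj sq (Th *m (u i - projTh cj sq Th Ur (u i))) ^+ 2
  = ip cj (col i (A *m C)) (col i (A *m C)).
Proof.
have Th_resid : Th *m col i (Um *m C) = col i (A *m C) by rewrite -col_mulmx mulmxA.
rewrite (projTh_sqr_eq (sketched_space_mem (col i (adj (eigmx r))))).
  by rewrite snapshot_residualE Th_resid.
move=> w /sketched_spaceP[c ->]; rewrite snapshot_residualE Th_resid.
rewrite -mulmxBr -mulmxBr (mulmxA Th) (mulmxA A) ip_col (mulmxA (adj (A *m C))).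
rewrite sketch_residual_orth.
by rewrite mul0mx mxE.
Qed.

Lemma DeltaPOD_sketched : DeltaPOD cj sq Th u Ur = m%:R^-1 * frob 1%:M (A *m C) (A *m C).
Proof.
by rewrite /DeltaPOD frob_col; congr (_ * _); apply: eq_bigr => i _; rewrite projTh_sketched mul1mx.
Qed.

Lemma proj_err_sketched_le (RU : 'M[K]_n) : self_adjoint cj RU -> pos_def cj RU ->
  proj_err cj sq RU u Ur <= frob RU (Um *m C) (Um *m C).
Proof.
move=> RU_sa RU_pd; rewrite frob_col; apply: ler_sum => i _.
rewrite normU_sqr // -ipUE // -snapshot_residualE.
exact/projU_min/sketched_space_mem.
Qed.

Section ErrorBounds.
Variables (RU : 'M[K]_n) (eps : K).
Hypotheses (RU_sa : self_adjoint cj RU) (RU_pd : pos_def cj RU) (eps_lt1 : eps < 1).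

Local Notation err W := (m%:R^-1 * proj_err cj sq RU u W).

Lemma sketched_err_le_DeltaPOD : eps_embedding cj sq RU Th eps (snapspace u) ->
  err Ur <= (1 - eps)^-1 * DeltaPOD cj sq Th u Ur.
Proof.
move=> emb; rewrite DeltaPOD_sketched mulrCA ler_wpM2l ?invr_ge0 //.
apply: le_trans (proj_err_sketched_le RU_sa RU_pd) _.
rewrite ler_pdivlMl ?subr_gt0 // -(mulmxA Th).
have memUm j : col j (Um *m C) \in snapspace u by rewrite col_mulmx snapspace_mem.
by have /andP[] := frob_eps_embedding RU_sa RU_pd (V := fun=> snapspace u) (fun=> emb) memUm.
Qed.

Lemma DeltaPOD_sketched_le (Ustar : {vspace 'cV[K]_n}) (V : 'I_m -> {vspace 'cV[K]_n}) :
  (\dim Ustar <= r)%N -> (forall i, eps_embedding cj sq RU Th eps (V i)) ->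
  (forall i, u i - projU cj RU Ustar (u i) \in V i) ->
  DeltaPOD cj sq Th u Ur <= (1 + eps) * err Ustar.
Proof.
move=> dim_Ustar V_emb residV.
rewrite DeltaPOD_sketched mulrCA ler_wpM2l ?invr_ge0 //.
set P := snapmx (fun i => projU cj RU Ustar (u i)).
have [|Z PZ] := basismx_factor (W := P) (V := Ustar).
  by move=> j; rewrite col_snapmx projU_mem.
have rank_le : (\rank (Th *m basismx Ustar) <= r)%N.
  exact: leq_trans (rank_leq_col _) dim_Ustar.
apply: le_trans (sketch_residual_min Z rank_le) _.
have -> : A - Th *m basismx Ustar *m Z = Th *m snapmx (fun i => u i - projU cj RU Ustar (u i)).
  by rewrite -mulmxA -PZ -mulmxBr; congr (_ *m _); apply/matrixP => a i; rewrite !mxE.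
rewrite /proj_err -frob_snapmx //.
have residV' j : col j (snapmx (fun i => u i - projU cj RU Ustar (u i))) \in V j.
  by rewrite col_snapmx.
by have /andP[] := frob_eps_embedding RU_sa RU_pd V_emb residV'.
Qed.

Lemma sketched_err_le_split (Y : {vspace 'cV[K]_n}) :
  eps_embedding cj sq RU Th eps Y ->
  (forall i, eps_embedding cj sq RU Th eps <[u i - projU cj RU Y (u i)]>) ->
  err Ur <= 2 / (1 - eps) * DeltaPOD cj sq Th u Ur
            + (2 * (1 + eps) / (1 - eps) + 1) * err Y.
Proof.
move=> Y_emb resid_emb.
set E := snapmx (fun i => u i - projU cj RU Y (u i)).
set Yb := snapmx (fun i => projU cj RU Y (u i)).
have UmE : Um = Yb + E by apply/matrixP => a i; rewrite !mxE addrC subrK.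
have YbY j : col j Yb \in Y by rewrite col_snapmx projU_mem.
have EV j : col j E \in <[u j - projU cj RU Y (u j)]>%VS by rewrite col_snapmx memv_line.
have YbE_orth : adj Yb *m (RU *m E) = 0.
  apply/matrixP => i j; rewrite [RHS]mxE.
  have -> : (adj Yb *m (RU *m E)) i j = ip cj (col i Yb) (RU *m col j E).
    by rewrite ip_col -!col_mulmx [RHS]mxE.
  by rewrite -ipUE // ipU_frob // !col_snapmx projU_orth // projU_mem.
have := frob_orthoproj_split_le RU_sa RU_pd eps_lt1 (orthoprojC orthoproj_eigproj)
  YbE_orth Y_emb YbY resid_emb EV.
rewrite -UmE /E frob_snapmx // -/(proj_err _ _ _ _ _) => split_le.
have m_ge0 : 0 <= m%:R^-1 :> K by rewrite invr_ge0.
apply: le_trans (ler_wpM2l m_ge0 (le_trans (proj_err_sketched_le RU_sa RU_pd) split_le)) _.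
by rewrite DeltaPOD_sketched le_eqVlt; apply/orP; left; apply/eqP; ring.
Qed.

End ErrorBounds.

End SketchedSnapshots.

Lemma thm54_generic : thm54_statement cj sq.
Proof.
move=> n m k RU u Th eps r Ustar l lam t RU_sa RU_pd _ eps_lt1 r_gt0 Ustar_sub dim_Ustar _.
move=> eig le_rl; cbv zeta; have le_dim_Ustar : (\dim Ustar <= r)%N by rewrite dim_Ustar.
have DeltaPOD_le := DeltaPOD_sketched_le eig r_gt0 le_rl RU_sa RU_pd le_dim_Ustar.
have inv_ge0 : 0 <= (1 - eps)^-1 by rewrite invr_ge0 subr_ge0 ltW.
split=> [Y _ _ Y_emb resid_emb star_emb | Um_emb _]; split.
- exact: (sketched_err_le_split eig le_rl RU_sa RU_pd eps_lt1 Y_emb resid_emb).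
- have -> : 2 * (1 + eps) / (1 - eps) = 2 / (1 - eps) * (1 + eps) by rewrite mulrAC.
  rewrite lerD2r -[X in _ <= X]mulrA ler_wpM2l ?mulr_ge0 //.
  by apply: DeltaPOD_le star_emb _ => i; apply: memv_line.
- exact: (sketched_err_le_DeltaPOD eig le_rl RU_sa RU_pd eps_lt1 Um_emb).
- rewrite [_ / _]mulrC -[X in _ <= X]mulrA ler_wpM2l //.
  apply: DeltaPOD_le (fun=> Um_emb) _ => i.
  apply: memvB; first exact: (sumv_sup i).
  exact: subvP Ustar_sub _ (projU_mem RU_sa RU_pd _ _).
Qed.

End ScalarsWithConjugation.

Theorem theorem5p4 :
  (forall R : rcfType, thm54_statement (fun x : R => x) Num.sqrt)
  /\ (forall C : numClosedFieldType, thm54_statement (@Num.conj C) sqrtC).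
Proof.
split=> [R | C].
- apply: (@thm54_generic R idfun) => // [x | x /eqP | x _ | x x_ge0].
  + by rewrite /= -expr2 sqr_ge0.
  + by rewrite /= mulf_eq0 orbb => /eqP.
  + exact: sqrtr_ge0.
  + exact: sqr_sqrtr.
- apply: (@thm54_generic C Num.conj) => [|x|x|x|x x_ge0|x _].
  + exact: conjCK.
  + exact: geC0_conj.
  + by rewrite mulrC mul_conjC_ge0.
  + by rewrite mulrC => /eqP; rewrite mul_conjC_eq0 => /eqP.
  + by rewrite sqrtC_ge0.
  + exact: sqrtCK.
Qed.
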